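(* Let $k$ be an algebraically closed field of characteristic zero, $\mathfrak g$ a nonzero finite-dimensional nilpotent Lie algebra over $k$, and $(A,\cdot)$ an LR-structure on $\mathfrak g$ such that the commuting family $\{L(x):x\in A\}$ has a single weight $\alpha$ on $A$ and $\alpha\ne 0$. Then $A$ contains an element $a\neq 0$ with $a\cdot a=a$.
   Context: An LR-algebra is a vector space $A$ with a bilinear product $\cdot$ satisfying $x\cdot(y\cdot z)=y\cdot(x\cdot z)$ and $(x\cdot y)\cdot z=(x\cdot z)\cdot y$ for all $x,y,z\in A$. An LR-structure on a Lie algebra $\mathfrak g$ is an LR-algebra product on the underlying vector space of $\mathfrak g$ with $x\cdot y-y\cdot x=[x,y]$. $L(x)y=x\cdot y$. ''Single weight $\alpha$'' means that for every $x$, $L(x)$ has only the eigenvalue $\alpha(L(x))$, where $\alpha$ is a linear form on the span of the $L(x)$. *)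

From HB Require Import structures.
From mathcomp Require Import all_boot all_order all_algebra.
Set Implicit Arguments. Unset Strict Implicit. Unset Printing Implicit Defensive.
Import GRing.Theory.
Local Open Scope ring_scope.

Section Defs.
Variables (k : fieldType) (n : nat).
Notation V := 'rV[k]_n.

Definition bilinear_op (op : V -> V -> V) : Prop :=
  (forall x, linear (op x)) /\ (forall y, linear (fun x => op x y)).

Definition lie_bracket (br : V -> V -> V) : Prop :=
  [/\ bilinear_op br, (forall x, br x x = 0) &
      (forall x y z, br x (br y z) + br y (br z x) + br z (br x y) = 0)].

(* nilpotent: some term of the lower central series vanishes, i.e. all
   iterated brackets [x1,[x2,...,[xm,y]...]] of a fixed length vanish *)
Definition nilpotent_lie (br : V -> V -> V) : Prop :=
  exists m : nat, forall (xs : seq V) (y : V), size xs = m -> foldr br y xs = 0.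

Definition LR_algebra (mul : V -> V -> V) : Prop :=
  (forall x y z, mul x (mul y z) = mul y (mul x z)) /\
  (forall x y z, mul (mul x y) z = mul (mul x z) y).

Definition LR_structure (br mul : V -> V -> V) : Prop :=
  [/\ bilinear_op mul, LR_algebra mul & forall x y, mul x y - mul y x = br x y].

(* left multiplication operator L(x), as a matrix acting on row vectors:
   v *m Lop mul x = mul x v *)
Definition Lop (mul : V -> V -> V) (x : V) : 'M[k]_n := lin1_mx (mul x).

Definition linear_form (alpha : 'M[k]_n -> k) : Prop :=
  forall (c : k) (A B : 'M[k]_n), alpha (c *: A + B) = c * alpha A + alpha B.

Definition single_weight (mul : V -> V -> V) (alpha : 'M[k]_n -> k) : Prop :=
  forall x a, eigenvalue (Lop mul x) a -> a = alpha (Lop mul x).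

End Defs.

From HB Require Import structures.
From mathcomp Require Import all_boot all_order all_algebra.
Import GRing.Theory.
Set Implicit Arguments. Unset Strict Implicit. Unset Printing Implicit Defensive.
Local Open Scope ring_scope.

(* Pick x0 with alpha(L(x0)) <> 0.  Since alpha(L(x0)) is the
   only eigenvalue of L(x0), the value 0 is not an eigenvalue, so L(x0) is
   invertible and there is e with x0.e = x0.  Every y is of the form x0.u,
   and the right-commutative LR identity (x.y).z = (x.z).y gives
      y.e = (x0.u).e = (x0.e).u = x0.u = y,
   so e is a right identity of A; in particular e.e = e, and e <> 0 because
   A <> 0. *)

Lemma lin1_mxE (k : fieldType) (n : nat) (f : 'rV[k]_n -> 'rV[k]_n)
    (hf : linear f) (u : 'rV[k]_n) :
  u *m lin1_mx f = f u.
Proof.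
pose g : {linear 'rV[k]_n -> 'rV[k]_n} :=
  HB.pack f (GRing.isLinear.Build k _ _ *:%R f hf).
exact: (mul_rV_lin1 g).
Qed.

Lemma linear_map0 (k : fieldType) (n : nat) (f : 'rV[k]_n -> 'rV[k]_n)
    (hf : linear f) :
  f 0 = 0.
Proof.
pose g : {linear 'rV[k]_n -> 'rV[k]_n} :=
  HB.pack f (GRing.isLinear.Build k _ _ *:%R f hf).
exact: (linear0 g).
Qed.

Lemma unitmx_no_eigenvalue0 (k : fieldType) (n : nat) (M : 'M[k]_n) :
  ~~ eigenvalue M 0 -> M \in unitmx.
Proof.
move=> not_eig0; rewrite -row_free_unit -kermx_eq0.
by move: not_eig0; rewrite /eigenvalue /eigenspace raddf0 subr0 negbK.
Qed.

Lemma single_weight_Lop_unit (k : fieldType) (n : nat)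
    (mul : 'rV[k]_n -> 'rV[k]_n -> 'rV[k]_n) (alpha : 'M[k]_n -> k)
    (x : 'rV[k]_n) :
  single_weight mul alpha -> alpha (Lop mul x) != 0 -> Lop mul x \in unitmx.
Proof.
move=> hw alpha_neq0; apply: unitmx_no_eigenvalue0; apply/negP => eig0.
by rewrite -(hw x 0 eig0) eqxx in alpha_neq0.
Qed.

Section RightIdentity.

Variables (k : fieldType) (n : nat) (mul : 'rV[k]_n -> 'rV[k]_n -> 'rV[k]_n).
Hypothesis mul_linear : forall x, linear (mul x).
Hypothesis mul_rightC : forall x y z, mul (mul x y) z = mul (mul x z) y.

(* If some left multiplication L(x) is invertible, the algebra has a right
   identity: solve x.e = x and use that L(x) is onto. *)
Lemma right_identity_of_Lop_unit (x : 'rV[k]_n) :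
  Lop mul x \in unitmx -> exists e, forall y, mul y e = y.
Proof.
move=> Lx_unit.
have LxE v : v *m Lop mul x = mul x v by rewrite /Lop lin1_mxE.
have Lx_onto y : mul x (y *m invmx (Lop mul x)) = y by rewrite -LxE mulmxKV.
exists (x *m invmx (Lop mul x)) => y.
by rewrite -{1}(Lx_onto y) mul_rightC Lx_onto.
Qed.

Lemma right_identity_neq0 (e : 'rV[k]_n) :
  (0 < n)%N -> (forall y, mul y e = y) -> e != 0.
Proof.
move=> n_gt0 e_id; apply/eqP => e0.
have all0 (y : 'rV[k]_n) : y = 0 by rewrite -(e_id y) e0 linear_map0.
have := congr1 (fun M : 'rV[k]_n => M 0 (Ordinal n_gt0)) (all0 (const_mx 1)).
by rewrite /= !mxE; apply/eqP; exact: oner_neq0.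
Qed.

End RightIdentity.

Theorem lemma2p4 (k : closedFieldType) (hchar : [pchar k] =i pred0) (n : nat)
  (hn : (0 < n)%N) (br mul : 'rV[k]_n -> 'rV[k]_n -> 'rV[k]_n)
  (hlie : lie_bracket br) (hnil : nilpotent_lie br)
  (hLR : LR_structure br mul)
  (alpha : 'M[k]_n -> k) (halin : linear_form alpha)
  (hw : single_weight mul alpha)
  (hne : exists x, alpha (Lop mul x) != 0) :
  exists a : 'rV[k]_n, a != 0 /\ mul a a = a.
Proof.
case: hLR => [[mul_linear _] [_ mul_rightC] _].
case: hne => x0 alpha_x0.
have [e e_id] := right_identity_of_Lop_unit mul_linear mul_rightC
  (single_weight_Lop_unit hw alpha_x0).
exists e; split; last exact: e_id.
exact: (right_identity_neq0 mul_linear hn e_id).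
Qed.
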